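(* $\mathbf{K}^{\nabla\bullet[\cdot]}$ is sound and complete with respect to the class of all frames: for every $\phi\in\mathcal{L}(\nabla,\bullet,[\cdot])$, $\vdash_{\mathbf{K}^{\nabla\bullet[\cdot]}}\phi$ iff $\phi$ is true at every state of every Kripke model.
   Context: Over a nonempty set $\mathbf{P}$ of propositional variables, $\mathcal{L}(\nabla,\bullet,[\cdot])$ is given by $\phi::=p\mid\neg\phi\mid\phi\land\phi\mid\nabla\phi\mid\bullet\phi\mid[\phi]\phi$; $\Delta\phi:=\neg\nabla\phi$, $\circ\phi:=\neg\bullet\phi$. Kripke models $\mathcal{M}=\langle S,R,V\rangle$: $s\vDash\nabla\phi$ iff there are $t,u$ with $sRt$, $sRu$, $t\vDash\phi$, $u\nvDash\phi$; $s\vDash\bullet\phi$ iff $s\vDash\phi$ and there is $t$ with $sRt$, $t\nvDash\phi$; $\mathcal{M},s\vDash[\psi]\phi$ iff ($\mathcal{M},s\vDash\psi$ implies $\mathcal{M}|_\psi,s\vDash\phi$), where $\mathcal{M}|_\psi$ is the restriction of $\mathcal{M}$ (domain, relation, valuation) to the set of states where $\psi$ is true in $\mathcal{M}$. The system $\mathbf{K}^{\nabla\bullet[\cdot]}$ consists of the axioms and rules of $\mathbf{K}^{\nabla\bullet}$ applied to the extended language — A0 all propositional tautologies; A1 $\bullet\phi\to\phi$; A2 $\nabla\phi\leftrightarrow\nabla\neg\phi$; A3 $\bullet(\psi\to\phi)\land\phi\to\bullet\phi$; A4 $\nabla(\phi\land\psi)\to\nabla\phi\vee\nabla\psi$; A5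 $\bullet(\phi\land\psi)\to\bullet\phi\vee\bullet\psi$; A6 $\nabla\phi\to\bullet\phi\vee\bullet\neg\phi$; A7 $\bullet(\phi\to\psi)\land\bullet(\neg\phi\to\chi)\to\nabla\phi$; R1 $\phi/\Delta\phi$; R2 $\phi/\circ\phi$; R3 $\phi\leftrightarrow\psi/\Delta\phi\leftrightarrow\Delta\psi$; R4 $\phi\leftrightarrow\psi/\circ\phi\leftrightarrow\circ\psi$; MP — together with the reduction axioms AP $[\psi]p\leftrightarrow(\psi\to p)$; AN $[\psi]\neg\phi\leftrightarrow(\psi\to\neg[\psi]\phi)$; AC $[\psi](\phi\land\chi)\leftrightarrow([\psi]\phi\land[\psi]\chi)$; AA $[\psi][\chi]\phi\leftrightarrow[\psi\land[\psi]\chi]\phi$; A$\nabla$ $[\psi]\nabla\phi\leftrightarrow(\psi\to\nabla[\psi]\phi\land\nabla[\psi]\neg\phi)$; A$\bullet$ $[\psi]\bullet\phi\leftrightarrow(\psi\to\bullet[\psi]\phi)$ (and, as is standard for the reduction method, replacement of provable equivalents). *)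

Set Implicit Arguments.

Section Syntax.
Variable P : Type.

Inductive form : Type :=
| Var : P -> form
| Neg : form -> form
| And : form -> form -> form
| Nab : form -> form
| Bul : form -> form
| Ann : form -> form -> form.   (* Ann psi phi = [psi]phi *)

Definition Imp (a b : form) : form := Neg (And a (Neg b)).
Definition Or (a b : form) : form := Neg (And (Neg a) (Neg b)).
Definition Iff (a b : form) : form := And (Imp a b) (Imp b a).
Definition Delta (a : form) : form := Neg (Nab a).
Definition Circ (a : form) : form := Neg (Bul a).

(* Boolean evaluation treating non-Boolean subformulas as atoms:
   phi is a (substitution instance of a) propositional tautology iff it is
   true under every assignment to its propositional atoms. *)
Fixpoint beval (v : form -> bool) (f : form) : bool :=
  match f with
  | Neg a => negb (beval v a)
  | And a b => andb (beval v a) (beval v b)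
  | _ => v f
  end.

Definition tautology (f : form) : Prop := forall v : form -> bool, beval v f = true.

Inductive ctx : Type :=
| Hole : ctx
| CNeg : ctx -> ctx
| CAndL : ctx -> form -> ctx
| CAndR : form -> ctx -> ctx
| CNab : ctx -> ctx
| CBul : ctx -> ctx
| CAnnL : ctx -> form -> ctx
| CAnnR : form -> ctx -> ctx.

Fixpoint plug (c : ctx) (f : form) : form :=
  match c with
  | Hole => f
  | CNeg c' => Neg (plug c' f)
  | CAndL c' b => And (plug c' f) b
  | CAndR a c' => And a (plug c' f)
  | CNab c' => Nab (plug c' f)
  | CBul c' => Bul (plug c' f)
  | CAnnL c' b => Ann (plug c' f) b
  | CAnnR a c' => Ann a (plug c' f)
  end.

Inductive provable : form -> Prop :=
| A0 : forall f, tautology f -> provable f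
| A1 : forall f, provable (Imp (Bul f) f)
| A2 : forall f, provable (Iff (Nab f) (Nab (Neg f)))
| A3 : forall f g, provable (Imp (And (Bul (Imp g f)) f) (Bul f))
| A4 : forall f g, provable (Imp (Nab (And f g)) (Or (Nab f) (Nab g)))
| A5 : forall f g, provable (Imp (Bul (And f g)) (Or (Bul f) (Bul g)))
| A6 : forall f, provable (Imp (Nab f) (Or (Bul f) (Bul (Neg f))))
| A7 : forall f g h,
    provable (Imp (And (Bul (Imp f g)) (Bul (Imp (Neg f) h))) (Nab f))
| R1 : forall f, provable f -> provable (Delta f)
| R2 : forall f, provable f -> provable (Circ f)
| R3 : forall f g, provable (Iff f g) -> provable (Iff (Delta f) (Delta g))
| R4 : forall f g, provable (Iff f g) -> provable (Iff (Circ f) (Circ g))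
| MP : forall f g, provable (Imp f g) -> provable f -> provable g
| AP : forall psi p, provable (Iff (Ann psi (Var p)) (Imp psi (Var p)))
| AN : forall psi f,
    provable (Iff (Ann psi (Neg f)) (Imp psi (Neg (Ann psi f))))
| AC : forall psi f g,
    provable (Iff (Ann psi (And f g)) (And (Ann psi f) (Ann psi g)))
| AA : forall psi chi f,
    provable (Iff (Ann psi (Ann chi f)) (Ann (And psi (Ann psi chi)) f))
| ANab : forall psi f,
    provable (Iff (Ann psi (Nab f))
                  (Imp psi (And (Nab (Ann psi f)) (Nab (Ann psi (Neg f))))))
| ABul : forall psi f,
    provable (Iff (Ann psi (Bul f)) (Imp psi (Bul (Ann psi f))))
| RE : forall (c : ctx) f g,
    provable (Iff f g) -> provable (Iff (plug c f) (plug c g)).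

End Syntax.

Arguments Var {P}.

Record model (P : Type) : Type := Model {
  state : Type;
  rel : state -> state -> Prop;
  val : P -> state -> Prop
}.

Arguments state {P}.
Arguments rel {P}.
Arguments val {P}.

Definition restrict (P : Type) (M : model P) (Q : state M -> Prop) : model P :=
  @Model P {s : state M | Q s}
    (fun s t => rel M (proj1_sig s) (proj1_sig t))
    (fun p s => val M p (proj1_sig s)).

Fixpoint sat (P : Type) (M : model P) (s : state M) (f : form P) {struct f} : Prop :=
  match f with
  | Var p => val M p s
  | Neg a => ~ sat M s a
  | And a b => sat M s a /\ sat M s b
  | Nab a => exists t u, rel M s t /\ rel M s u /\ sat M t a /\ ~ sat M u a
  | Bul a => sat M s a /\ exists t, rel M s t /\ ~ sat M t a
  | Ann psi a =>
      forall H : sat M s psi,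
        sat (restrict M (fun t => sat M t psi))
            (exist (fun t => sat M t psi) s H) a
  end.

Definition valid (P : Type) (f : form P) : Prop :=
  forall (M : model P) (s : state M), sat M s f.

(* Soundness is checked axiom by axiom; for the reduction axioms the restricted
   models being compared are only isomorphic (e.g. M|psi|chi and M|(psi /\ [psi]chi)),
   so truth is first shown to be invariant under isomorphism.

   For completeness, the reduction axioms and replacement of equivalents turn every
   formula into a provably equivalent announcement-free one, so only the static logic
   K^{nabla,bullet} remains.  Its canonical model has maximal consistent sets as states,
   t being a successor of s when t contains every formula that s "boxes"; the axioms
   A1-A7 make the boxed formulas closed under provable consequence and conjunction,
   which yields the existence lemma and the truth lemma.  Lindenbaum's construction
   enumerates formulas, so it is done over atoms in nat; an arbitrary formula is moved
   there and back by renaming its finitely many atoms. *)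

From Stdlib Require Import Classical ClassicalEpsilon ProofIrrelevance
  FunctionalExtensionality PropExtensionality List Cantor PeanoNat.

Set Implicit Arguments.

Arguments Hole {P}.
Arguments CNeg {P}.
Arguments CAndL {P}.
Arguments CAndR {P}.
Arguments CNab {P}.
Arguments CBul {P}.
Arguments CAnnL {P}.
Arguments CAnnR {P}.

Ltac taut :=
  let v := fresh "v" in
  intro v; unfold Imp, Iff, Or, Delta, Circ in *; simpl;
  repeat match goal with
  | |- context [beval v ?x] => destruct (beval v x)
  | |- context [v ?x] => destruct (v x)
  end; reflexivity.

Section Hilbert.
Variable P : Type.
Implicit Types a b c : form P.

Lemma provable_taut_mp a b : provable a -> tautology (Imp a b) -> provable b.
Proof. intros Ha Hab. exact (MP (A0 Hab) Ha). Qed.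

Lemma provable_taut_mp2 a b c :
  provable a -> provable b -> tautology (Imp a (Imp b c)) -> provable c.
Proof. intros Ha Hb Habc. exact (MP (MP (A0 Habc) Ha) Hb). Qed.

Lemma provable_iff_refl a : provable (Iff a a).
Proof. apply A0; taut. Qed.

Lemma provable_iff_trans a b c :
  provable (Iff a b) -> provable (Iff b c) -> provable (Iff a c).
Proof. intros Hab Hbc. apply (provable_taut_mp2 Hab Hbc); taut. Qed.

Lemma provable_iff_neg a b : provable (Iff a b) -> provable (Iff (Neg a) (Neg b)).
Proof. exact (@RE P (CNeg Hole) a b). Qed.

Lemma provable_iff_nab a b : provable (Iff a b) -> provable (Iff (Nab a) (Nab b)).
Proof. exact (@RE P (CNab Hole) a b). Qed.

Lemma provable_iff_bul a b : provable (Iff a b) -> provable (Iff (Bul a) (Bul b)).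
Proof. exact (@RE P (CBul Hole) a b). Qed.

Lemma provable_iff_and (a b a' b' : form P) : provable (Iff a a') -> provable (Iff b b') ->
  provable (Iff (And a b) (And a' b')).
Proof.
  intros Ha Hb. exact (provable_iff_trans (RE (CAndL Hole b) Ha) (RE (CAndR a' Hole) Hb)).
Qed.

Lemma provable_iff_ann (a b a' b' : form P) : provable (Iff a a') -> provable (Iff b b') ->
  provable (Iff (Ann a b) (Ann a' b')).
Proof.
  intros Ha Hb. exact (provable_iff_trans (RE (CAnnL Hole b) Ha) (RE (CAnnR a' Hole) Hb)).
Qed.

Lemma provable_iff_imp (a b a' b' : form P) : provable (Iff a a') -> provable (Iff b b') ->
  provable (Iff (Imp a b) (Imp a' b')).
Proof.
  intros Ha Hb. apply provable_iff_neg, provable_iff_and, provable_iff_neg; assumption.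
Qed.

End Hilbert.

Section Semantics.
Variable P : Type.
Implicit Types (M N : model P) (a b c f : form P).

Lemma sat_Imp M s a b : sat M s (Imp a b) <-> (sat M s a -> sat M s b).
Proof. simpl; split; [intros H Ha; apply NNPP; tauto | tauto]. Qed.

Lemma sat_Iff M s a b : sat M s (Iff a b) <-> (sat M s a <-> sat M s b).
Proof.
  change (sat M s (Imp a b) /\ sat M s (Imp b a) <-> (sat M s a <-> sat M s b)).
  rewrite !sat_Imp; tauto.
Qed.

Lemma sat_Or M s a b : sat M s (Or a b) <-> sat M s a \/ sat M s b.
Proof. simpl; split; [intro H; apply NNPP | ]; tauto. Qed.

Opaque Imp Iff Or.

Lemma sat_restrict_pi M (Q : state M -> Prop) s (H1 H2 : Q s) a :
  sat (restrict M Q) (exist Q s H1) a -> sat (restrict M Q) (exist Q s H2) a.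
Proof. now rewrite (proof_irrelevance _ H2 H1). Qed.

Lemma sat_Ann_pred M (Q : state M -> Prop) s a b : (forall t, sat M t a <-> Q t) ->
  sat M s (Ann a b) <-> forall H : Q s, sat (restrict M Q) (exist Q s H) b.
Proof.
  intro HQ.
  replace Q with (fun t => sat M t a) by (extensionality t; apply propositional_extensionality, HQ).
  reflexivity.
Qed.

Lemma beval_sat (v : form P -> bool) M s f :
  (forall x, v x = true <-> sat M s x) -> beval v f = true <-> sat M s f.
Proof.
  intro Hv; induction f; try apply Hv; simpl.
  - rewrite <- IHf; destruct (beval v f); simpl; intuition discriminate.
  - rewrite <- IHf1, <- IHf2; destruct (beval v f1), (beval v f2); simpl;
      intuition discriminate.
Qed.

Lemma tautology_valid f : tautology f -> valid f.
Proof.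
  intros Hf M s.
  set (v := fun x => if excluded_middle_informative (sat M s x) then true else false).
  apply (beval_sat v); [| apply Hf].
  intro x; unfold v; destruct excluded_middle_informative; intuition discriminate.
Qed.

Record iso M N := Iso {
  iso_fun :> state M -> state N;
  iso_inv : state N -> state M;
  iso_funK : forall x, iso_inv (iso_fun x) = x;
  iso_invK : forall y, iso_fun (iso_inv y) = y;
  iso_rel : forall x y, rel M x y <-> rel N (iso_fun x) (iso_fun y);
  iso_val : forall p x, val M p x <-> val N p (iso_fun x) }.

Definition iso_restrict M N (i : iso M N) (Q : state M -> Prop) (Q' : state N -> Prop)
  (HQ : forall x, Q x <-> Q' (i x)) : iso (restrict M Q) (restrict N Q').
Proof.
  unshelve refine (@Iso (restrict M Q) (restrict N Q')
    (fun z => exist Q' (i (proj1_sig z)) _) (fun z => exist Q (iso_inv i (proj1_sig z)) _)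
    _ _ _ _).
  - apply HQ, proj2_sig.
  - apply HQ; rewrite iso_invK; apply proj2_sig.
  - intros [x Hx]; apply subset_eq_compat, iso_funK.
  - intros [y Hy]; apply subset_eq_compat, iso_invK.
  - intros [x Hx] [y Hy]; exact (iso_rel i x y).
  - intros p [x Hx]; exact (iso_val i p x).
Defined.

Lemma sat_iso a : forall M N (i : iso M N) x, sat M x a <-> sat N (i x) a.
Proof.
  induction a as [p|a IHa|a IHa b IHb|a IHa|a IHa|a IHa b IHb]; intros M N i x; simpl.
  - apply iso_val.
  - rewrite (IHa _ _ i); tauto.
  - rewrite (IHa _ _ i), (IHb _ _ i); tauto.
  - split.
    + intros (t & u & ? & ? & ? & ?); exists (i t), (i u).
      rewrite <- !(iso_rel i), <- !(IHa _ _ i); tauto.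
    + intros (t & u & ? & ? & ? & ?); exists (iso_inv i t), (iso_inv i u).
      rewrite !(iso_rel i), !(IHa _ _ i), !(iso_invK i); tauto.
  - split.
    + intros (? & t & ? & ?); split; [apply IHa; assumption|]; exists (i t).
      rewrite <- (iso_rel i), <- (IHa _ _ i); tauto.
    + intros (? & t & ? & ?); split; [apply (IHa _ _ i); assumption|].
      exists (iso_inv i t); rewrite (iso_rel i), (IHa _ _ i), (iso_invK i); tauto.
  - pose (j := iso_restrict i (fun t => sat M t a) (fun u => sat N u a) (IHa _ _ i)).
    split; intros H Ha.
    + specialize (H (proj2 (IHa _ _ i x) Ha)); apply (IHb _ _ j) in H.
      eapply sat_restrict_pi, H.
    + apply (IHb _ _ j); eapply sat_restrict_pi, (H (proj1 (IHa _ _ i x) Ha)).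
Qed.

Lemma sat_plug (c : ctx P) a b : (forall M s, sat M s a <-> sat M s b) ->
  forall M s, sat M s (plug c a) <-> sat M s (plug c b).
Proof.
  intro Hab; induction c as [|c IH|c IH d|d c IH|c IH|c IH|c IH d|d c IH];
    intros M s; simpl plug.
  - apply Hab.
  - simpl; rewrite IH; tauto.
  - simpl; rewrite IH; tauto.
  - simpl; rewrite IH; tauto.
  - simpl; setoid_rewrite IH; reflexivity.
  - simpl; setoid_rewrite IH; reflexivity.
  - rewrite (sat_Ann_pred _ (fun t => sat M t (plug c b))) by apply IH; reflexivity.
  - simpl; split; intros H Hd; apply IH; auto.
Qed.

Lemma valid_A3 f g : valid (Imp (And (Bul (Imp g f)) f) (Bul f)).
Proof.
  intros M s; rewrite sat_Imp; simpl; intros [[_ (t & Hst & Ht)] Hf].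
  split; [exact Hf|]; exists t; split; [exact Hst|].
  intro Hft; apply Ht; rewrite sat_Imp; auto.
Qed.

Lemma valid_A7 f g h : valid (Imp (And (Bul (Imp f g)) (Bul (Imp (Neg f) h))) (Nab f)).
Proof.
  intros M s; rewrite sat_Imp; simpl; intros [[_ (t & Hst & Ht)] [_ (u & Hsu & Hu)]].
  rewrite sat_Imp in Ht, Hu.
  exists t, u; split; [exact Hst|]; split; [exact Hsu|]; split.
  - apply NNPP; intro Hft; apply Ht; intro; contradiction.
  - intro Hfu; apply Hu; intro; contradiction.
Qed.

Lemma valid_AN psi f : valid (Iff (Ann psi (Neg f)) (Imp psi (Neg (Ann psi f)))).
Proof.
  intros M s; rewrite sat_Iff, sat_Imp; simpl; split.
  - intros H Hpsi Hf; exact (H Hpsi (Hf Hpsi)).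
  - intros H Hpsi Hf; apply (H Hpsi); intro Hpsi'; eapply sat_restrict_pi, Hf.
Qed.

Definition iso_restrict_restrict M (Q : state M -> Prop) (R : state (restrict M Q) -> Prop)
  (Q' : state M -> Prop) (HQ : forall t, Q' t <-> exists H : Q t, R (exist Q t H)) :
  iso (restrict (restrict M Q) R) (restrict M Q').
Proof.
  unshelve refine (@Iso (restrict (restrict M Q) R) (restrict M Q')
    (fun z => exist Q' (proj1_sig (proj1_sig z)) _) _ _ _ _ _).
  - destruct z as [[t Ht] Hr]; apply HQ; exists Ht; exact Hr.
  - intros [t Ht]; apply HQ in Ht; destruct (constructive_indefinite_description _ Ht) as [H Hr].
    exact (exist R (exist Q t H) Hr).
  - intros [[t Ht] Hr]; simpl; destruct constructive_indefinite_description as [H' Hr'].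
    apply subset_eq_compat, subset_eq_compat; reflexivity.
  - intros [t Ht]; simpl; destruct constructive_indefinite_description.
    apply subset_eq_compat; reflexivity.
  - intros [[t Ht] Hr] [[u Hu] Hr']; reflexivity.
  - intros p [[t Ht] Hr]; reflexivity.
Defined.

Lemma valid_AA psi chi f :
  valid (Iff (Ann psi (Ann chi f)) (Ann (And psi (Ann psi chi)) f)).
Proof.
  intros M s; rewrite sat_Iff.
  set (M1 := restrict M (fun t => sat M t psi)).
  set (Q := fun t => sat M t (And psi (Ann psi chi))).
  assert (HQ : forall t, Q t <-> exists H, sat M1 (exist _ t H) chi).
  { intro t; split.
    - intros [Hpsi Hchi]; exists Hpsi; exact (Hchi Hpsi).
    - intros [Hpsi Hchi]; split; [exact Hpsi|]; intro; eapply sat_restrict_pi, Hchi. }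
  pose (i := iso_restrict_restrict (fun z => sat M1 z chi) Q HQ).
  simpl; split.
  - intros H [Hpsi Hchi].
    apply (sat_iso f i (exist _ (exist _ s Hpsi) (Hchi Hpsi))) in H.
    eapply sat_restrict_pi, H.
  - intros H Hpsi Hchi; apply (sat_iso f i (exist _ (exist _ s Hpsi) Hchi)).
    eapply sat_restrict_pi, (H (proj2 (HQ s) (ex_intro _ Hpsi Hchi))).
Qed.

Lemma valid_ANab psi f : valid (Iff (Ann psi (Nab f))
  (Imp psi (And (Nab (Ann psi f)) (Nab (Ann psi (Neg f)))))).
Proof.
  intros M s; rewrite sat_Iff, sat_Imp; simpl; split.
  - intros H Hpsi; destruct (H Hpsi) as ([t Ht] & [u Hu] & Hst & Hsu & Hft & Hfu); simpl in *.
    split.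
    + exists t, u; split; [exact Hst|]; split; [exact Hsu|]; split.
      * intro; eapply sat_restrict_pi, Hft.
      * intro Hf; exact (Hfu (Hf Hu)).
    + exists u, t; split; [exact Hsu|]; split; [exact Hst|]; split.
      * intros ? Hf; apply Hfu; eapply sat_restrict_pi, Hf.
      * intro Hf; exact (Hf Ht Hft).
  - intros H Hpsi.
    destruct (H Hpsi) as [(_ & u & _ & Hsu & _ & Hfu) (_ & u' & _ & Hsu' & _ & Hfu')].
    assert (Hu : sat M u psi) by (apply NNPP; intro; apply Hfu; intro; contradiction).
    assert (Hu' : sat M u' psi) by (apply NNPP; intro; apply Hfu'; intro; contradiction).
    exists (exist _ u' Hu'), (exist _ u Hu); simpl; split; [exact Hsu'|]; split; [exact Hsu|].
    split.
    + apply NNPP; intro Hf; apply Hfu'; intros ? Hf'; apply Hf; eapply sat_restrict_pi, Hf'.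
    + intro Hf; apply Hfu; intro; eapply sat_restrict_pi, Hf.
Qed.

Lemma valid_ABul psi f : valid (Iff (Ann psi (Bul f)) (Imp psi (Bul (Ann psi f)))).
Proof.
  intros M s; rewrite sat_Iff, sat_Imp; simpl; split.
  - intros H Hpsi; destruct (H Hpsi) as (Hf & [t Ht] & Hst & Hft); simpl in *.
    split; [intro; eapply sat_restrict_pi, Hf|].
    exists t; split; [exact Hst|]; intro Hf'; exact (Hft (Hf' Ht)).
  - intros H Hpsi; destruct (H Hpsi) as (Hf & t & Hst & Hft).
    assert (Ht : sat M t psi) by (apply NNPP; intro; apply Hft; intro; contradiction).
    split; [apply Hf|]; exists (exist _ t Ht); split; [exact Hst|].
    intro Hf'; apply Hft; intro; eapply sat_restrict_pi, Hf'.
Qed.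

Theorem soundness f : provable f -> valid f.
Proof.
  induction 1; try (intros M s).
  - apply tautology_valid; assumption.
  - rewrite sat_Imp; simpl; tauto.
  - rewrite sat_Iff; simpl.
    split; intros (t & u & ? & ? & ? & ?); exists u, t; intuition (apply NNPP; auto).
  - apply valid_A3.
  - rewrite sat_Imp, sat_Or; simpl; intros (t & u & ? & ? & [? ?] & ?).
    destruct (classic (sat M u f)); [right | left]; exists t, u; tauto.
  - rewrite sat_Imp, sat_Or; simpl; intros [[? ?] (t & ? & ?)].
    destruct (classic (sat M t f)); [right | left]; split; try exists t; tauto.
  - rewrite sat_Imp, sat_Or; simpl; intros (t & u & ? & ? & ? & ?).
    destruct (classic (sat M s f)); [left; split; try exists u | right; split; try exists t];
      tauto.
  - apply valid_A7.
  - simpl; intros (t & u & _ & _ & _ & Hu); exact (Hu (IHprovable _ u)).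
  - simpl; intros [_ (t & _ & Ht)]; exact (Ht (IHprovable _ t)).
  - rewrite sat_Iff; apply (sat_plug (CNeg (CNab Hole))); intros; rewrite <- sat_Iff; auto.
  - rewrite sat_Iff; apply (sat_plug (CNeg (CBul Hole))); intros; rewrite <- sat_Iff; auto.
  - apply (proj1 (sat_Imp _ _ _ _) (IHprovable1 M s)), IHprovable2.
  - rewrite sat_Iff, sat_Imp; simpl; tauto.
  - apply valid_AN.
  - rewrite sat_Iff; simpl; firstorder.
  - apply valid_AA.
  - apply valid_ANab.
  - apply valid_ABul.
  - rewrite sat_Iff; apply sat_plug; intros; rewrite <- sat_Iff; auto.
Qed.

End Semantics.

Section Reduction.
Variable P : Type.
Implicit Types a b f : form P.

Fixpoint ann_free f : Prop :=
  match f with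
  | Var _ => True
  | Neg a | Nab a | Bul a => ann_free a
  | And a b => ann_free a /\ ann_free b
  | Ann _ _ => False
  end.

Lemma reduce_Ann psi f : ann_free psi -> ann_free f ->
  exists g, ann_free g /\ provable (Iff (Ann psi f) g).
Proof.
  intro Hpsi; induction f as [p|a IHa|a IHa b IHb|a IHa|a IHa|a IHa b IHb]; simpl; intro Hf.
  - exists (Imp psi (Var p)); split; [simpl; auto | apply AP].
  - destruct (IHa Hf) as (a' & Ha' & Ea); exists (Imp psi (Neg a')); split; [simpl; auto|].
    eapply provable_iff_trans; [apply AN|].
    apply provable_iff_imp, provable_iff_neg; [apply provable_iff_refl | exact Ea].
  - destruct (IHa (proj1 Hf)) as (a' & Ha' & Ea), (IHb (proj2 Hf)) as (b' & Hb' & Eb).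
    exists (And a' b'); split; [simpl; auto|].
    eapply provable_iff_trans; [apply AC | apply provable_iff_and; assumption].
  - destruct (IHa Hf) as (a' & Ha' & Ea).
    exists (Imp psi (And (Nab a') (Nab (Imp psi (Neg a'))))); split; [simpl; auto|].
    eapply provable_iff_trans; [apply ANab|].
    apply provable_iff_imp, provable_iff_and; try apply provable_iff_refl;
      apply provable_iff_nab; [exact Ea|].
    eapply provable_iff_trans; [apply AN|].
    apply provable_iff_imp, provable_iff_neg; [apply provable_iff_refl | exact Ea].
  - destruct (IHa Hf) as (a' & Ha' & Ea); exists (Imp psi (Bul a')); split; [simpl; auto|].
    eapply provable_iff_trans; [apply ABul|].
    apply provable_iff_imp, provable_iff_bul; [apply provable_iff_refl | exact Ea].
  - contradiction.
Qed.

Lemma reduce_ann_free f : exists g, ann_free g /\ provable (Iff f g).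
Proof.
  induction f as [p|a IHa|a IHa b IHb|a IHa|a IHa|a IHa b IHb].
  - exists (Var p); split; [exact I | apply provable_iff_refl].
  - destruct IHa as (a' & ? & ?); exists (Neg a'); split; [assumption | now apply provable_iff_neg].
  - destruct IHa as (a' & ? & ?), IHb as (b' & ? & ?); exists (And a' b').
    split; [split; assumption | now apply provable_iff_and].
  - destruct IHa as (a' & ? & ?); exists (Nab a'); split; [assumption | now apply provable_iff_nab].
  - destruct IHa as (a' & ? & ?); exists (Bul a'); split; [assumption | now apply provable_iff_bul].
  - destruct IHa as (a' & Ha & Ea), IHb as (b' & Hb & Eb).
    destruct (reduce_Ann a' b' Ha Hb) as (g & Hg & E); exists g; split; [exact Hg|].
    exact (provable_iff_trans (provable_iff_ann Ea Eb) E).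
Qed.

Lemma completeness_from_ann_free :
  (forall g, ann_free g -> valid g -> provable g) -> forall f, valid f -> provable f.
Proof.
  intros Hcomp f Hf; destruct (reduce_ann_free f) as (g & Hg & E).
  assert (Hvg : valid g).
  { intros M s; apply (proj1 (sat_Iff _ _ _ _) (soundness E M s)), Hf. }
  apply (provable_taut_mp2 E (Hcomp g Hg Hvg)); taut.
Qed.

End Reduction.

Section Renaming.
Variables A B : Type.
Variable r : A -> B.

Fixpoint rename (f : form A) : form B :=
  match f with
  | Var p => Var (r p)
  | Neg a => Neg (rename a)
  | And a b => And (rename a) (rename b)
  | Nab a => Nab (rename a)
  | Bul a => Bul (rename a)
  | Ann a b => Ann (rename a) (rename b)
  end.

Fixpoint rename_ctx (c : ctx A) : ctx B :=
  match c with
  | Hole => Hole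
  | CNeg c => CNeg (rename_ctx c)
  | CAndL c b => CAndL (rename_ctx c) (rename b)
  | CAndR a c => CAndR (rename a) (rename_ctx c)
  | CNab c => CNab (rename_ctx c)
  | CBul c => CBul (rename_ctx c)
  | CAnnL c b => CAnnL (rename_ctx c) (rename b)
  | CAnnR a c => CAnnR (rename a) (rename_ctx c)
  end.

Lemma rename_plug c f : rename (plug c f) = plug (rename_ctx c) (rename f).
Proof. induction c; simpl; congruence. Qed.

Lemma beval_rename v f : beval v (rename f) = beval (fun x => v (rename x)) f.
Proof. induction f; simpl; congruence. Qed.

Lemma provable_rename f : provable f -> provable (rename f).
Proof.
  induction 1; simpl; try solve [eauto using provable].
  - apply A0; intro v; rewrite beval_rename; auto.
  - exact (MP IHprovable1 IHprovable2).
  - rewrite !rename_plug; apply RE; assumption.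
Qed.

Definition model_rename (M : model B) : model A :=
  @Model A (state M) (rel M) (fun p s => val M (r p) s).

Lemma sat_rename f : forall (M : model B) s, sat (model_rename M) s f <-> sat M s (rename f).
Proof.
  induction f as [p|a IHa|a IHa b IHb|a IHa|a IHa|a IHa b IHb]; intros M s.
  - reflexivity.
  - simpl; rewrite IHa; reflexivity.
  - simpl; rewrite IHa, IHb; reflexivity.
  - simpl; setoid_rewrite IHa; reflexivity.
  - simpl; setoid_rewrite IHa; reflexivity.
  - rewrite (sat_Ann_pred (model_rename M) (fun t => sat M t (rename a))) by apply IHa.
    split; intros H Ha; apply (IHb (restrict M _)), H.
Qed.

End Renaming.

Section Lindenbaum.
Implicit Types (a b c f g : form nat) (G : form nat -> Prop).

Definition top : form nat := Imp (Var 0) (Var 0).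

Fixpoint conjs (L : list (form nat)) : form nat :=
  match L with nil => top | x :: L => And x (conjs L) end.

Definition consistent G :=
  forall L, (forall x, In x L -> G x) -> ~ provable (Neg (conjs L)).

Definition maximal_consistent G := consistent G /\ forall f, G f \/ G (Neg f).

Definition extend G a f := G f \/ f = a.

Lemma conjs_app L1 L2 : provable (Imp (conjs (L1 ++ L2)) (And (conjs L1) (conjs L2))).
Proof.
  induction L1 as [|x L1 IH]; simpl; [apply A0; unfold top; taut|].
  apply (provable_taut_mp IH); taut.
Qed.

Lemma conjs_extend {G a L} : (forall x, In x L -> extend G a x) ->
  exists L', (forall x, In x L' -> G x) /\ provable (Imp (And (conjs L') a) (conjs L)).
Proof.
  induction L as [|y L IH]; intro HL.
  - exists nil; split; [intros x []|]; apply A0; unfold top; taut.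
  - destruct IH as (L' & HL' & E); [intros x Hx; apply HL; right; exact Hx|].
    destruct (HL y (or_introl eq_refl)) as [Hy | ->].
    + exists (y :: L'); split; [intros x [<- | Hx]; auto|].
      apply (provable_taut_mp E); taut.
    + exists L'; split; [exact HL'|]; apply (provable_taut_mp E); taut.
Qed.

Lemma inconsistent_extend {G a} : ~ consistent (extend G a) ->
  exists L, (forall x, In x L -> G x) /\ provable (Imp (conjs L) (Neg a)).
Proof.
  intro H; apply not_all_ex_not in H as [L H]; apply imply_to_and in H as [HL H].
  apply NNPP in H; destruct (conjs_extend HL) as (L' & HL' & E).
  exists L'; split; [exact HL'|]; apply (provable_taut_mp2 H E); taut.
Qed.

Lemma consistent_extend {G a} : consistent G -> ~ consistent (extend G a) ->
  consistent (extend G (Neg a)).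
Proof.
  intros HG Ha; apply NNPP; intro HNa.
  destruct (inconsistent_extend Ha) as (L1 & HL1 & E1).
  destruct (inconsistent_extend HNa) as (L2 & HL2 & E2).
  apply (HG (L1 ++ L2)); [intros x Hx; apply in_app_or in Hx as [|]; auto|].
  assert (E : provable (Neg (And (conjs L1) (conjs L2))))
    by (apply (provable_taut_mp2 E1 E2); taut).
  apply (provable_taut_mp2 (conjs_app L1 L2) E); taut.
Qed.

Fixpoint code (f : form nat) : nat :=
  match f with
  | Var n => to_nat (0, n)
  | Neg a => to_nat (1, code a)
  | And a b => to_nat (2, to_nat (code a, code b))
  | Nab a => to_nat (3, code a)
  | Bul a => to_nat (4, code a)
  | Ann a b => to_nat (5, to_nat (code a, code b))
  end.

Lemma to_nat_inj (x y : nat * nat) : to_nat x = to_nat y -> x = y.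
Proof. intro E; rewrite <- (cancel_of_to x), <- (cancel_of_to y), E; reflexivity. Qed.

Lemma code_inj f g : code f = code g -> f = g.
Proof.
  revert g; induction f; destruct g; intro E; cbn [code] in E;
    repeat match goal with
    | H : to_nat _ = to_nat _ |- _ => apply to_nat_inj, pair_equal_spec in H as [? ?]
    end;
    try discriminate; f_equal; auto.
Qed.

Definition decode (n : nat) : form nat :=
  epsilon (inhabits (Var 0)) (fun f => code f = n).

Lemma decode_code f : decode (code f) = f.
Proof.
  apply code_inj, (epsilon_spec (inhabits (Var 0)) (fun g => code g = code f)).
  exists f; reflexivity.
Qed.

Fixpoint lindenbaum_chain G n : form nat -> Prop :=
  match n with
  | 0 => G
  | S n =>
      let H := lindenbaum_chain G n in
      if excluded_middle_informative (consistent (extend H (decode n)))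
      then extend H (decode n) else extend H (Neg (decode n))
  end.

Lemma lindenbaum_chain_mono G n m f :
  n <= m -> lindenbaum_chain G n f -> lindenbaum_chain G m f.
Proof. induction 1; simpl; [auto|]; destruct excluded_middle_informative; left; auto. Qed.

Lemma lindenbaum_chain_consistent G n : consistent G -> consistent (lindenbaum_chain G n).
Proof.
  intro HG; induction n as [|n IH]; simpl; [exact HG|].
  destruct excluded_middle_informative as [H|H]; [exact H|].
  exact (consistent_extend IH H).
Qed.

Lemma lindenbaum_chain_list {G L} : (forall x, In x L -> exists n, lindenbaum_chain G n x) ->
  exists n, forall x, In x L -> lindenbaum_chain G n x.
Proof.
  induction L as [|y L IH]; intro HL; [exists 0; intros x []|].
  destruct (IH (fun x Hx => HL x (or_intror Hx))) as [n Hn].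
  destruct (HL y (or_introl eq_refl)) as [m Hm].
  exists (max n m); intros x [<- | Hx]; eapply lindenbaum_chain_mono.
  - apply Nat.le_max_r.
  - exact Hm.
  - apply Nat.le_max_l.
  - exact (Hn x Hx).
Qed.

Lemma lindenbaum G : consistent G ->
  exists s, maximal_consistent s /\ forall f, G f -> s f.
Proof.
  intro HG; exists (fun f => exists n, lindenbaum_chain G n f); split; [split|].
  - intros L HL; destruct (lindenbaum_chain_list HL) as [n Hn].
    exact (lindenbaum_chain_consistent n HG L Hn).
  - intro f; pose proof (decode_code f) as E.
    destruct (excluded_middle_informative (consistent (extend (lindenbaum_chain G (code f)) f)))
      as [H|H]; [left | right]; exists (S (code f)); simpl; rewrite E;
      destruct excluded_middle_informative; try contradiction; right; reflexivity.
  - intros f Hf; exists 0; exact Hf.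
Qed.

End Lindenbaum.

Section MaximalConsistent.
Variable s : form nat -> Prop.
Hypothesis Hs : maximal_consistent s.
Implicit Types a b c p : form nat.

Lemma mcs_derive L b : (forall x, In x L -> s x) -> provable (Imp (conjs L) b) -> s b.
Proof.
  intros HL Hb; destruct (proj2 Hs b) as [H|H]; [exact H|]; exfalso.
  apply (proj1 Hs (Neg b :: L)); [intros x [<- | Hx]; auto|].
  apply (provable_taut_mp Hb); taut.
Qed.

Lemma mcs_provable b : provable b -> s b.
Proof.
  intro Hb; apply (mcs_derive nil); [intros x []|].
  apply (provable_taut_mp Hb); unfold top; taut.
Qed.

Lemma mcs_mp a b : s a -> provable (Imp a b) -> s b.
Proof.
  intros Ha Hab; apply (mcs_derive (a :: nil)); [intros x [<- | []]; exact Ha|].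
  apply (provable_taut_mp Hab); unfold top; taut.
Qed.

Lemma mcs_mp2 a b c : s a -> s b -> provable (Imp a (Imp b c)) -> s c.
Proof.
  intros Ha Hb Habc; apply (mcs_derive (a :: b :: nil)); [intros x [<- | [<- | []]]; auto|].
  apply (provable_taut_mp Habc); unfold top; taut.
Qed.

Lemma mcs_neg a : s (Neg a) <-> ~ s a.
Proof.
  split.
  - intros HNa Ha; apply (proj1 Hs (a :: Neg a :: nil)); [intros x [<- | [<- | []]]; auto|].
    apply A0; unfold top; taut.
  - intro Ha; destruct (proj2 Hs a); tauto.
Qed.

Lemma mcs_and a b : s (And a b) <-> s a /\ s b.
Proof.
  split; [intro H; split; apply (mcs_mp H), A0; taut|].
  intros [Ha Hb]; apply (mcs_mp2 Ha Hb), A0; taut.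
Qed.

Lemma mcs_or a b : s (Or a b) <-> s a \/ s b.
Proof.
  split.
  - intro H; destruct (classic (s a)) as [Ha|Ha]; [left; exact Ha | right].
    apply mcs_neg in Ha; apply (mcs_mp2 H Ha), A0; taut.
  - intros [H|H]; apply (mcs_mp H), A0; taut.
Qed.

Lemma mcs_iff a b : provable (Iff a b) -> s a -> s b.
Proof. intros Hab Ha; apply (mcs_mp Ha), (provable_taut_mp Hab); taut. Qed.

Lemma mcs_bul_iff a b : provable (Iff a b) -> s (Bul a) -> s (Bul b).
Proof. intro Hab; apply mcs_iff, provable_iff_bul, Hab. Qed.

Lemma mcs_bul_taut a b : s (Bul a) -> tautology (Iff a b) -> s (Bul b).
Proof. intros Ha Hab; exact (mcs_bul_iff (A0 Hab) Ha). Qed.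

Lemma mcs_nab_neg a : s (Nab (Neg a)) <-> s (Nab a).
Proof.
  split; apply mcs_iff; [apply (provable_taut_mp (A2 a)) | apply A2]; taut.
Qed.

Lemma mcs_bul_T a : s (Bul a) -> s a.
Proof. intro H; exact (mcs_mp H (A1 a)). Qed.

Lemma mcs_A3 a b : s (Bul (Imp b a)) -> s a -> s (Bul a).
Proof. intros H1 H2; apply (mcs_mp (proj2 (mcs_and _ _) (conj H1 H2))), A3. Qed.

Lemma mcs_nab_and a b : s (Nab (And a b)) -> s (Nab a) \/ s (Nab b).
Proof. intro H; apply mcs_or, (mcs_mp H), A4. Qed.

Lemma mcs_nab_or a b : s (Nab (Or a b)) -> s (Nab a) \/ s (Nab b).
Proof.
  intro H; apply mcs_nab_neg, mcs_nab_and in H as [H|H]; [left | right];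
    apply mcs_nab_neg, H.
Qed.

Lemma mcs_bul_and a b : s (Bul (And a b)) -> s (Bul a) \/ s (Bul b).
Proof. intro H; apply mcs_or, (mcs_mp H), A5. Qed.

Lemma mcs_nab_bul a : s (Nab a) -> s a -> s (Bul a).
Proof.
  intros H Ha; destruct (proj1 (mcs_or _ _) (mcs_mp H (A6 a))) as [H'|H']; [exact H'|].
  apply mcs_bul_T, mcs_neg in H'; contradiction.
Qed.

Lemma mcs_A7 a b c : s (Bul (Imp a b)) -> s (Bul (Imp (Neg a) c)) -> s (Nab a).
Proof. intros H1 H2; apply (mcs_mp (proj2 (mcs_and _ _) (conj H1 H2))), A7. Qed.


(* [boxed c]: c holds at every successor.  Either c holds here and is not refuted
   at a successor, or c fails here, holds at some successor, and all successors
   agree on it. *)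
Definition boxed c := (s c /\ ~ s (Bul c)) \/ (~ s c /\ s (Bul (Neg c)) /\ ~ s (Nab c)).

Lemma boxed_mono c p : provable (Imp c p) -> boxed c -> boxed p.
Proof.
  intros Hcp [[Hc HBc] | (Hc & HBNc & HNc)].
  - left; split; [exact (mcs_mp Hc Hcp)|]; intro HBp; apply HBc.
    apply (mcs_A3 (b := Neg p)); [|exact Hc].
    apply (mcs_bul_iff (a := p)); [apply (provable_taut_mp Hcp); taut | exact HBp].
  - assert (B : s (Bul (Imp c (Neg c)))) by (apply (mcs_bul_taut HBNc); taut).
    destruct (classic (s p)) as [Hp|Hp].
    + left; split; [exact Hp|]; intro HBp; apply HNc, (mcs_A7 (c := p) B).
      apply (mcs_bul_iff (a := p)); [apply (provable_taut_mp Hcp); taut | exact HBp].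
    + right; split; [exact Hp|]; split.
      * apply (mcs_A3 (b := c)); [| apply mcs_neg, Hp].
        apply (mcs_bul_iff (a := Neg c)); [apply (provable_taut_mp Hcp); taut | exact HBNc].
      * intro HNp; apply HNc.
        assert (E : provable (Iff p (Or c (And p (Neg c)))))
          by (apply (provable_taut_mp Hcp); taut).
        destruct (mcs_nab_or (mcs_iff (provable_iff_nab E) HNp)) as [H|H]; [exact H|].
        destruct (proj1 (mcs_or _ _) (mcs_mp H (A6 _))) as [H'|H'].
        -- apply mcs_bul_T, mcs_and in H'; tauto.
        -- apply (mcs_A7 (c := Neg p) B), (mcs_bul_taut H'); taut.
Qed.

Lemma boxed_and_mixed a b : s a -> ~ s (Bul a) -> ~ s b -> s (Bul (Neg b)) -> ~ s (Nab b) ->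
  boxed (And a b).
Proof.
  intros Ha HBa Hb HBNb HNb; right; split; [rewrite mcs_and; tauto|]; split.
  - assert (B : s (Bul (And a (Neg b)))).
    { apply (mcs_A3 (b := b)); [|apply mcs_and; split; [exact Ha | apply mcs_neg, Hb]].
      apply (mcs_bul_taut HBNb); taut. }
    assert (B' : s (Bul (And a (Imp a (Neg b))))) by (apply (mcs_bul_taut B); taut).
    destruct (mcs_bul_and B') as [H|H]; [contradiction|].
    apply (mcs_bul_taut H); taut.
  - intro H; destruct (mcs_nab_and H) as [H'|H'];
      [exact (HBa (mcs_nab_bul H' Ha)) | exact (HNb H')].
Qed.

Lemma boxed_and a b : boxed a -> boxed b -> boxed (And a b).
Proof.
  intros [[Ha HBa] | (Ha & HBNa & HNa)] [[Hb HBb] | (Hb & HBNb & HNb)].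
  - left; split; [apply mcs_and; split; assumption|].
    intro H; destruct (mcs_bul_and H); contradiction.
  - apply boxed_and_mixed; assumption.
  - apply (boxed_mono (c := And b a)); [apply A0; taut | apply boxed_and_mixed; assumption].
  - right; split; [rewrite mcs_and; tauto|]; split.
    + apply NNPP; intro HBN; apply HNb.
      assert (B : s (Bul (And (Imp a b) (Neg (And a b))))) by (apply (mcs_bul_taut HBNa); taut).
      destruct (mcs_bul_and B) as [Hab|]; [|contradiction].
      apply (mcs_A7 (b := Neg b) (c := Neg a)).
      * apply (mcs_bul_taut HBNb); taut.
      * apply (mcs_bul_taut Hab); taut.
    + intro H; destruct (mcs_nab_and H); contradiction.
Qed.

Lemma boxed_conjs L : (forall x, In x L -> boxed x) -> boxed (conjs L).
Proof.
  induction L as [|x L IH]; simpl; intro HL.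
  - left; split; [apply mcs_provable, A0; unfold top; taut|].
    apply mcs_neg, mcs_provable, R2, A0; unfold top; taut.
  - apply boxed_and; auto.
Qed.

Lemma mcs_nab_not_boxed a : s (Nab a) -> ~ boxed a.
Proof.
  intros H [[Ha HBa] | (_ & _ & HN)]; [exact (HBa (mcs_nab_bul H Ha)) | exact (HN H)].
Qed.

Lemma mcs_nab_boxed a : s (Nab a) <-> ~ boxed a /\ ~ boxed (Neg a).
Proof.
  split.
  - intro H; split; apply mcs_nab_not_boxed; [|apply mcs_nab_neg]; exact H.
  - intros [Hba HbNa]; apply NNPP; intro HN.
    destruct (classic (s a)) as [Ha|Ha]; destruct (classic (s (Bul a))) as [HBa|HBa].
    + apply HbNa; right; split; [intro H; apply mcs_neg in H; contradiction|]; split.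
      * apply (mcs_bul_taut HBa); taut.
      * rewrite mcs_nab_neg; exact HN.
    + apply Hba; left; split; assumption.
    + exact (Ha (mcs_bul_T HBa)).
    + destruct (classic (s (Bul (Neg a)))) as [HBNa|HBNa].
      * apply Hba; right; repeat split; assumption.
      * apply HbNa; left; split; [apply mcs_neg, Ha | exact HBNa].
Qed.

Lemma mcs_bul_boxed a : s (Bul a) <-> s a /\ ~ boxed a.
Proof.
  split.
  - intro H; split; [exact (mcs_bul_T H)|].
    intros [[_ HB] | (Ha & _ & _)]; [exact (HB H) | exact (Ha (mcs_bul_T H))].
  - intros [Ha Hb]; apply NNPP; intro HB; apply Hb; left; split; assumption.
Qed.

Definition successor (t : form nat -> Prop) := forall c, boxed c -> t c.

End MaximalConsistent.

Lemma successor_refuting s p : maximal_consistent s -> ~ boxed s p ->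
  exists t, maximal_consistent t /\ successor s t /\ ~ t p.
Proof.
  intros Hs Hp; destruct (classic (consistent (extend (boxed s) (Neg p)))) as [Hc|Hc].
  - destruct (lindenbaum Hc) as (t & Ht & Hext); exists t; split; [exact Ht|]; split.
    + intros c Hcb; apply Hext; left; exact Hcb.
    + apply (mcs_neg Ht), Hext; right; reflexivity.
  - destruct (inconsistent_extend Hc) as (L & HL & E); exfalso.
    apply Hp, (boxed_mono Hs (c := conjs L)); [apply (provable_taut_mp E); taut|].
    apply (boxed_conjs Hs), HL.
Qed.

Definition canonical_model : model nat :=
  @Model nat {s : form nat -> Prop | maximal_consistent s}
    (fun s t => successor (proj1_sig s) (proj1_sig t))
    (fun n s => proj1_sig s (Var n)).

Lemma truth_lemma (f : form nat) : ann_free f ->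
  forall s : state canonical_model, sat canonical_model s f <-> proj1_sig s f.
Proof.
  induction f as [p|a IHa|a IHa b IHb|a IHa|a IHa|a IHa b IHb]; simpl; intros Hf [s Hs]; simpl.
  - reflexivity.
  - rewrite (IHa Hf), (mcs_neg Hs); reflexivity.
  - rewrite (IHa (proj1 Hf)), (IHb (proj2 Hf)), (mcs_and Hs); reflexivity.
  - rewrite (mcs_nab_boxed Hs); split.
    + intros ([t Ht] & [u Hu] & Hst & Hsu & Hta & Hua).
      rewrite (IHa Hf) in Hta, Hua; simpl in *.
      split; intro Hb; [exact (Hua (Hsu a Hb)) | exact (proj1 (mcs_neg Ht a) (Hst _ Hb) Hta)].
    + intros [Ha HNa].
      destruct (successor_refuting Hs HNa) as (t & Ht & Hst & Hta).
      destruct (successor_refuting Hs Ha) as (u & Hu & Hsu & Hua).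
      exists (exist _ t Ht), (exist _ u Hu); rewrite !(IHa Hf); simpl.
      split; [exact Hst|]; split; [exact Hsu|]; split; [|exact Hua].
      destruct (proj2 Ht a); tauto.
  - rewrite (mcs_bul_boxed Hs), (IHa Hf); simpl; split.
    + intros [Hsa ([t Ht] & Hst & Hta)]; split; [exact Hsa|]; intro Hb.
      rewrite (IHa Hf) in Hta; exact (Hta (Hst a Hb)).
    + intros [Hsa Hb]; split; [exact Hsa|].
      destruct (successor_refuting Hs Hb) as (t & Ht & Hst & Hta).
      exists (exist _ t Ht); rewrite (IHa Hf); split; assumption.
  - contradiction.
Qed.

Lemma ann_free_completeness (f : form nat) : ann_free f -> valid f -> provable f.
Proof.
  intros Hf Hv; apply NNPP; intro Hn.
  assert (Hc : consistent (extend (fun _ => False) (Neg f))).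
  { apply NNPP; intro H; destruct (inconsistent_extend H) as ([|x L] & HL & E).
    - apply Hn, (provable_taut_mp E); unfold top; taut.
    - exact (HL x (or_introl eq_refl)). }
  destruct (lindenbaum Hc) as (s & Hs & Hext).
  apply (proj1 (mcs_neg Hs f) (Hext _ (or_intror eq_refl))).
  apply (truth_lemma f Hf (exist _ s Hs)), Hv.
Qed.

Fixpoint atoms (A : Type) (f : form A) : list A :=
  match f with
  | Var p => p :: nil
  | Neg a | Nab a | Bul a => atoms a
  | And a b | Ann a b => atoms a ++ atoms b
  end.

Lemma rename_rename_id (A B : Type) (r : A -> B) (r' : B -> A) (f : form A) :
  (forall p, In p (atoms f) -> r' (r p) = p) -> rename r' (rename r f) = f.
Proof.
  induction f; simpl; intro H; f_equal; auto using in_or_app.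
Qed.

Theorem completeness (P : Type) (p0 : P) (f : form P) : valid f -> provable f.
Proof.
  intro Hv.
  pose (dec := fun n => nth n (atoms f) p0).
  pose (enc := fun p => epsilon (inhabits 0) (fun n => dec n = p)).
  assert (E : rename dec (rename enc f) = f).
  { apply rename_rename_id; intros p Hp; apply (epsilon_spec (inhabits 0) (fun n => dec n = p)).
    destruct (In_nth _ _ p0 Hp) as (n & _ & Hn); exists n; exact Hn. }
  rewrite <- E; apply provable_rename, (completeness_from_ann_free ann_free_completeness).
  intros M s; apply sat_rename, Hv.
Qed.

Theorem theorem5 (P : Type) (p0 : P) (phi : form P) :
  provable phi <-> valid phi.
Proof. split; [apply soundness | apply (completeness p0)]. Qed.
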